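(* Let $I$ be a stable matching instance with $k$-range preferences and $n$ men and $n$ women, and let $G(I)$ be the rotation digraph of $I$. Suppose $(\rho, \sigma)$ is a directed edge in $G(I)$. Then there exists $i \in [n]$ such that $i \in \mathrm{ext}(\rho) \cap \mathrm{ext}(\sigma)$.
   Context: An SM instance $I$ has men and women with complete strict preference lists; $P_a(b)$ is the rank $a$ assigns $b$. For an agent $a$, $\min\mathrm{rank}(a)$ and $\max\mathrm{rank}(a)$ are the minimum and maximum of $P_b(a)$ over agents $b$ of the opposite sex; $I$ has $k$-range preferences if $\max\mathrm{rank}(a) - \min\mathrm{rank}(a) \leq k-1$ for all $a$. A rotation is a circular list $(m_1,w_1),\ldots,(m_\ell,w_\ell)$ of pairs of some stable matching $\mu$ such that $w_{i+1}$ is the first woman after $w_i$ on $m_i$'s list who prefers $m_i$ to her partner $m_{i+1}$ in $\mu$; eliminating it matches $m_i$ to $w_{i+1}$ (''moves $m_i$ down to $w_{i+1}$'', moving $m_i$ below any woman strictly between $w_i,w_{i+1}$ on his list; it moves $w_i$ up to $m_{i-1}$, above any man strictly between). The rotation digraph $G(I)$ (computed by Gusfield's algorithm) is a DAG on the rotations whose transitive closure is the rotation poset, with an edge $(\rho',\rho)$ exactly when (Rule 1) $(m,w)$ is in $\rho$ and $\rho'$ is the rotation that moves $m$ to $w$, or (Rule 2) $(m,w)$ is not in $\rho$, $\rho'\ne\rho$ is the rotation moving $w$ above $m$ and $\rho$ is the rotation moving $m$ below $w$. For a rotation $\rho$, $\mathrm{ext}(\rho) = [\min\mathrm{rank}_{\min}(\rho)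 - 2k+1, \min\mathrm{rank}_{\max}(\rho) + 2k-1]$, where $\min\mathrm{rank}_{\min}(\rho)$ and $\min\mathrm{rank}_{\max}(\rho)$ are the minimum and maximum of $\min\mathrm{rank}(a)$ over agents $a$ appearing in $\rho$. *)

From mathcomp Require Import all_boot all_order all_algebra all_fingroup.
Set Implicit Arguments. Unset Strict Implicit. Unset Printing Implicit Defensive.
Import Order.TTheory GRing.Theory Num.Theory.

(* An SM instance with n men and n women, both indexed by 'I_n.
   [pm m] : {perm 'I_n} maps a woman w to (P_m(w) - 1), i.e. man m's
   (complete, strict) preference list; [pw w] likewise for woman w.
   Ranks P_a(b) are 1-based: P_m(w) = (pm m w).+1.  Smaller rank = preferred. *)
Definition prefs (n : nat) := 'I_n -> {perm 'I_n}.

(* agents: inl m = man m, inr w = woman w *)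
Definition agent (n : nat) := ('I_n + 'I_n)%type.

Definition minrank n (pm pw : prefs n) (a : agent n) : nat :=
  match a with
  | inl m => \big[minn/n]_(w : 'I_n) (pw w m).+1
  | inr w => \big[minn/n]_(m : 'I_n) (pm m w).+1
  end.

Definition maxrank n (pm pw : prefs n) (a : agent n) : nat :=
  match a with
  | inl m => \max_(w : 'I_n) (pw w m).+1
  | inr w => \max_(m : 'I_n) (pm m w).+1
  end.

Definition k_range n (pm pw : prefs n) (k : nat) : Prop :=
  forall a : agent n, (maxrank pm pw a < minrank pm pw a + k)%N.

(* A perfect matching is a permutation mu: man m is matched to woman mu m,
   woman w to man mu^-1 w. *)
Definition stable n (pm pw : prefs n) (mu : {perm 'I_n}) : Prop :=
  forall (m w : 'I_n),
    ~ ((pm m w < pm m (mu m))%N /\ (pw w m < pw w ((mu^-1)%g w))%N).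

(* w' is the first woman after mu(m) on m's list who prefers m to her
   partner, and that partner is m'. *)
Definition is_next n (pm pw : prefs n) (mu : {perm 'I_n}) (m w' m' : 'I_n) : Prop :=
  [/\ mu m' = w',
      (pm m (mu m) < pm m w')%N,
      (pw w' m < pw w' m')%N &
      forall w'' : 'I_n,
        (pm m (mu m) < pm m w'')%N -> (pm m w'' < pm m w')%N ->
        ~ (pw w'' m < pw w'' ((mu^-1)%g w''))%N].

Definition consec n (r : seq ('I_n * 'I_n)) : seq (('I_n * 'I_n) * ('I_n * 'I_n)) :=
  zip r (rot 1 r).

Definition exposed n (pm pw : prefs n) (mu : {perm 'I_n}) (r : seq ('I_n * 'I_n)) : Prop :=
  [/\ r != [::], uniq r,
      (forall p, p \in r -> mu p.1 = p.2) &
      (forall q, q \in consec r -> is_next pm pw mu q.1.1 q.2.2 q.2.1)].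

Definition is_rotation n (pm pw : prefs n) (r : seq ('I_n * 'I_n)) : Prop :=
  exists mu : {perm 'I_n}, stable pm pw mu /\ exposed pm pw mu r.

Definition same_rot n (r r' : seq ('I_n * 'I_n)) : Prop :=
  exists j, r' = rot j r.

(* r moves m (down) to w : m = m_i and w = w_{i+1} *)
Definition moves_to n (r : seq ('I_n * 'I_n)) (m w : 'I_n) : Prop :=
  exists2 q, q \in consec r & q.1.1 = m /\ q.2.2 = w.

(* r moves m below w : m = m_i and w strictly between w_i and w_{i+1}
   on m's list *)
Definition moves_below n (pm : prefs n) (r : seq ('I_n * 'I_n)) (m w : 'I_n) : Prop :=
  exists2 q, q \in consec r &
    [/\ q.1.1 = m, (pm m q.1.2 < pm m w)%N & (pm m w < pm m q.2.2)%N].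

(* r moves w above m : w = w_{i+1} moves from m_{i+1} up to m_i, and m is
   strictly between m_i and m_{i+1} on w's list *)
Definition moves_above n (pw : prefs n) (r : seq ('I_n * 'I_n)) (w m : 'I_n) : Prop :=
  exists2 q, q \in consec r &
    [/\ q.2.2 = w, (pw w q.1.1 < pw w m)%N & (pw w m < pw w q.2.1)%N].

Definition rot_edge n (pm pw : prefs n) (r' r : seq ('I_n * 'I_n)) : Prop :=
  [/\ is_rotation pm pw r', is_rotation pm pw r &
      (exists m w : 'I_n, (m, w) \in r /\ moves_to r' m w)
   \/ (exists m w : 'I_n, [/\ (m, w) \notin r, ~ same_rot r r',
                             moves_above pw r' w m & moves_below pm r m w])].

Definition minrank_min n (pm pw : prefs n) (r : seq ('I_n * 'I_n)) : nat :=
  \big[minn/n]_(p <- r) minn (minrank pm pw (inl p.1)) (minrank pm pw (inr p.2)).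

Definition minrank_max n (pm pw : prefs n) (r : seq ('I_n * 'I_n)) : nat :=
  \max_(p <- r) maxn (minrank pm pw (inl p.1)) (minrank pm pw (inr p.2)).

Definition in_ext n (pm pw : prefs n) (k : nat) (r : seq ('I_n * 'I_n)) (i : nat) : bool :=
  ((((minrank_min pm pw r)%:Z - (2 * k)%:Z + 1 <= i%:Z)%R)
   && ((i%:Z <= (minrank_max pm pw r)%:Z + (2 * k)%:Z - 1)%R)).

From mathcomp Require Import all_boot all_order all_algebra all_fingroup.
From mathcomp Require Import zify.
Import Order.TTheory.

(* Under Rule 1 the two rotations share a man, whose minrank then lies in both
   extents.  Under Rule 2, rho contains a woman w and sigma a man m, and we show
   |minrank m - minrank w| <= 2k - 2, so that the smaller of the two minranks
   lies in both extents.  The bound is a pigeonhole argument: if, in some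
   perfect matching, every woman w' whom m ranks at least as high as w weakly
   prefers her partner m' to m, then k-range gives minrank m' < minrank m + k
   and then P_w(m') <= minrank m + 2k - 2; these P_m(w) partners are distinct,
   so minrank w <= P_m(w) <= minrank m + 2k - 2.  In the matching exposing
   sigma the hypothesis holds by stability and the choice of m's next woman; in
   the matching exposing rho, w prefers m to her partner, and the same argument
   with the sexes exchanged applies. *)

Set Implicit Arguments.
Unset Strict Implicit.
Unset Printing Implicit Defensive.

Lemma count_iota_lt B n : count (fun i => i < B) (iota 0 n) = minn B n.
Proof.
elim: n => [|n IH]; first by rewrite minn0.
rewrite -addn1 iotaD count_cat IH /= add0n addn0.
case: (ltnP n B) => h /=; rewrite /minn; case: ifP => /= ?; lia.
Qed.

Lemma card_rank_lt n (g : {perm 'I_n}) B : #|[set j | g j < B]| = minn B n.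
Proof.
have -> : [set j | g j < B] = g @^-1: [set i : 'I_n | i < B].
  by apply/setP => j; rewrite !inE.
rewrite card_preimset; last exact: perm_inj.
rewrite cardsE cardE /enum_mem size_filter -enumT.
by rewrite -(count_map val (fun i => i < B)) val_enum_ord count_iota_lt.
Qed.

Lemma rank_pigeonhole n (f g h : {perm 'I_n}) r B :
  r < n -> (forall j, g j <= r -> h (f j) < B) -> r < B.
Proof.
move=> lt_rn gh.
have sub : f @: [set j | g j < r.+1] \subset [set j | h j < B].
  by apply/subsetP => _ /imsetP[j + ->]; rewrite !inE; apply: gh.
move: (subset_leq_card sub); rewrite card_imset; last exact: perm_inj.
by rewrite !card_rank_lt (minn_idPl lt_rn) leq_min => /andP[].
Qed.

Section Ranks.
Variables (n : nat) (pm pw : prefs n).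

Lemma minrank_bounds (a : agent n) : 0 < minrank pm pw a <= n.
Proof.
have n_gt0 : 0 < n by case: a => x; apply: leq_ltn_trans (ltn_ord x).
case: a => x; apply/andP; split;
  by [apply: (@le_bigmin _ nat) | apply: (@bigmin_le_id _ nat)].
Qed.

Lemma minrank_man_le (m w : 'I_n) : minrank pm pw (inl m) <= (pw w m).+1.
Proof. exact: (@bigmin_le _ nat). Qed.

Lemma minrank_woman_le (m w : 'I_n) : minrank pm pw (inr w) <= (pm m w).+1.
Proof. exact: (@bigmin_le _ nat). Qed.

Lemma k_range_man_rank k (m w : 'I_n) :
  k_range pm pw k -> (pw w m).+1 < minrank pm pw (inl m) + k.
Proof. by move/(_ (inl m)); apply: leq_ltn_trans; apply: (@le_bigmax _ nat). Qed.

Lemma k_range_gt0 k (m : 'I_n) : k_range pm pw k -> 0 < k.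
Proof. by move/(k_range_man_rank m m); have := minrank_man_le m m; lia. Qed.

End Ranks.

Lemma k_range_swap n (pm pw : prefs n) k : k_range pm pw k -> k_range pw pm k.
Proof. by move=> kr [m | w]; [exact: (kr (inr m)) | exact: (kr (inl w))]. Qed.

Lemma minrank_gap n (pm pw : prefs n) k (mu : {perm 'I_n}) (m w : 'I_n) :
  k_range pm pw k ->
  (forall w', pm m w' <= pm m w -> pw w' ((mu^-1)%g w') <= pw w' m) ->
  minrank pm pw (inr w) + 2 <= minrank pm pw (inl m) + 2 * k.
Proof.
move=> kr partner_le.
have rank_w_lt : pm m w < minrank pm pw (inl m) + 2 * k - 2.
  apply: (rank_pigeonhole (f := (mu^-1)%g) (h := pw w)) => // w' /partner_le le_w'.
  have := k_range_man_rank m w' kr.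
  have := minrank_man_le pm pw ((mu^-1)%g w') w'.
  have := k_range_man_rank ((mu^-1)%g w') w kr.
  lia.
by have := minrank_woman_le pm pw m w; lia.
Qed.

Lemma minrank_gap_dual n (pm pw : prefs n) k (mu : {perm 'I_n}) (m w : 'I_n) :
  k_range pm pw k ->
  (forall m', pw w m' <= pw w m -> pm m' (mu m') <= pm m' w) ->
  minrank pm pw (inl m) + 2 <= minrank pm pw (inr w) + 2 * k.
Proof.
move=> /k_range_swap kr partner_le.
(* [minrank pw pm (inr x)] is convertible to [minrank pm pw (inl x)]. *)
by apply: (minrank_gap (mu := (mu^-1)%g) kr) => m'; rewrite invgK; apply: partner_le.
Qed.

Lemma mem_consec n (r : seq ('I_n * 'I_n)) q : q \in consec r -> q.1 \in r /\ q.2 \in r.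
Proof.
move=> qr; have size_r : size (rot 1 r) = size r by rewrite size_rot.
split; first by rewrite -(unzip1_zip (eq_leq (esym size_r))); apply: map_f.
by rewrite -(mem_rot 1) -(unzip2_zip (eq_leq size_r)); apply: map_f.
Qed.

Section Rotations.
Variables (n : nat) (pm pw : prefs n) (k : nat).
Hypothesis kr : k_range pm pw k.

Lemma minrank_gap_of_preferred (mu : {perm 'I_n}) (m w : 'I_n) :
  stable pm pw mu -> pw w m < pw w ((mu^-1)%g w) ->
  minrank pm pw (inl m) + 2 <= minrank pm pw (inr w) + 2 * k.
Proof.
move=> st w_prefers_m; apply: (minrank_gap_dual (mu := mu) kr) => m' le_m'.
rewrite leqNgt; apply/negP => m'_prefers_w; apply: (st m' w); split => //.
exact: leq_ltn_trans le_m' w_prefers_m.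
Qed.

Lemma minrank_gap_before_next (mu : {perm 'I_n}) (m w w2 : 'I_n) :
  stable pm pw mu -> pm m w < pm m w2 ->
  (forall w', pm m (mu m) < pm m w' -> pm m w' < pm m w2 ->
     ~ (pw w' m < pw w' ((mu^-1)%g w'))) ->
  minrank pm pw (inr w) + 2 <= minrank pm pw (inl m) + 2 * k.
Proof.
move=> st lt_w_w2 none_between; apply: (minrank_gap (mu := mu) kr) => w' le_w'.
rewrite leqNgt; apply/negP => w'_prefers_m.
case: (ltngtP (pm m w') (pm m (mu m))) => [w'_above | w'_below | w'_at].
- by apply: (st m w').
- by apply: (none_between w') => //; apply: leq_ltn_trans le_w' lt_w_w2.
- have w'_eq : w' = mu m by apply: (perm_inj (s := pm m)); apply: val_inj.
  by move: w'_prefers_m; rewrite w'_eq permK ltnn.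
Qed.

Lemma moves_above_gap (mu : {perm 'I_n}) r (m w : 'I_n) :
  stable pm pw mu -> exposed pm pw mu r -> moves_above pw r w m ->
  minrank pm pw (inl m) + 2 <= minrank pm pw (inr w) + 2 * k.
Proof.
move=> st [_ _ _ next] [q /next [partner _ _ _] [<- _ w_prefers_m]].
have partner_inv : (mu^-1)%g q.2.2 = q.2.1 by rewrite -partner permK.
by apply: (minrank_gap_of_preferred st); rewrite partner_inv.
Qed.

Lemma moves_below_gap (mu : {perm 'I_n}) r (m w : 'I_n) :
  stable pm pw mu -> exposed pm pw mu r -> moves_below pm r m w ->
  minrank pm pw (inr w) + 2 <= minrank pm pw (inl m) + 2 * k.
Proof.
move=> st [_ _ _ next] [q /next [_ _ _ none_between] [<- _ lt_w_next]].
exact: (minrank_gap_before_next st lt_w_next).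
Qed.

End Rotations.

Section Extent.
Variables (n : nat) (pm pw : prefs n) (k : nat).

Lemma minrank_span r (m w : 'I_n) : (m, w) \in r ->
  minrank_min pm pw r <= minrank pm pw (inl m) <= minrank_max pm pw r /\
  minrank_min pm pw r <= minrank pm pw (inr w) <= minrank_max pm pw r.
Proof.
move=> pr.
have lo : minrank_min pm pw r <= minn (minrank pm pw (inl m)) (minrank pm pw (inr w)).
  exact: (@ge_bigmin_seq _ nat _ r n _ xpredT _ pr).
have hi : maxn (minrank pm pw (inl m)) (minrank pm pw (inr w)) <= minrank_max pm pw r.
  exact: (@leq_bigmax_seq _ r xpredT _ _ pr).
lia.
Qed.

Lemma in_extE r i :
  in_ext pm pw k r i =
  (minrank_min pm pw r + 1 <= i + 2 * k) && (i + 1 <= minrank_max pm pw r + 2 * k).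
Proof. by rewrite /in_ext; apply/andP/andP => -[]; split; lia. Qed.

Lemma ext_meet r1 r2 A B :
  minrank_min pm pw r1 <= A <= minrank_max pm pw r1 ->
  minrank_min pm pw r2 <= B <= minrank_max pm pw r2 ->
  0 < A <= n -> 0 < B <= n -> A + 1 <= B + 2 * k -> B + 1 <= A + 2 * k ->
  exists i : nat, [/\ (1 <= i <= n)%N, in_ext pm pw k r1 i & in_ext pm pw k r2 i].
Proof.
move=> spanA spanB rangeA rangeB AB BA.
by exists (minn A B); rewrite !in_extE; split; apply/andP; split; lia.
Qed.

End Extent.

Theorem lemma7p8 (n k : nat) (pm pw : prefs n) (rho sigma : seq ('I_n * 'I_n)) :
  k_range pm pw k ->
  rot_edge pm pw rho sigma ->
  exists i : nat, [/\ (1 <= i <= n)%N, in_ext pm pw k rho i & in_ext pm pw k sigma i].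
Proof.
move=> kr [[mu1 [st1 ex1]] [mu2 [st2 ex2]] [[m [w [mw to_w]]] | [m [w [_ _ above below]]]]].
- case: to_w => [[[m1 w1] _]] /mem_consec[/= m1w1 _] [/= m1_eq _].
  have [span_rho _] := minrank_span pm pw m1w1; rewrite m1_eq in span_rho.
  have [span_sigma _] := minrank_span pm pw mw.
  have k_gt0 := k_range_gt0 m kr.
  by apply: (ext_meet span_rho span_sigma); rewrite ?minrank_bounds //; lia.
- have gap_rho := moves_above_gap kr st1 ex1 above.
  have gap_sigma := moves_below_gap kr st2 ex2 below.
  case: above => [[_ [m2 w2]]] /mem_consec[_ /= m2w2] [/= w2_eq _ _].
  case: below => [[[m1 w1] _]] /mem_consec[/= m1w1 _] [/= m1_eq _ _].
  have [_ span_rho] := minrank_span pm pw m2w2; rewrite w2_eq in span_rho.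
  have [span_sigma _] := minrank_span pm pw m1w1; rewrite m1_eq in span_sigma.
  by apply: (ext_meet span_rho span_sigma); rewrite ?minrank_bounds //; lia.
Qed.
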